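(* Let $n\ge 3$ and $x\in S_n$ avoid $132$. Then there exists $1\le i\le n-2$ with $|\mathrm{Act}_i(x;132)|=|\mathrm{Act}_{i+1}(x;132)|\le|\mathrm{Act}_{i+2}(x;132)|$ if and only if $x$ contains the bivincular pattern $123^{\star}$.
   Context: For $w=w_1\cdots w_{m}\in S_{m}$ and $1\le i\le m+1$, let $w^i$ be the permutation obtained by inserting $m+1$ immediately before $w_i$ (at the end if $i=m+1$). For a pattern $y$, site $i$ of $w$ is active with respect to $y$ if $w^i$ avoids $y$ (has no subsequence order-isomorphic to $y$). For $x\in S_n$ and $1\le k\le n$, let $\mathrm{small}_k(x)$ be the subsequence of $x$ formed by the entries $1,\dots,k$ (a permutation in $S_k$). For $1\le j\le n$, $\mathrm{Act}_j(x;y)$ is the set of active sites of $\mathrm{small}_{n+1-j}(x)$ with respect to $y$. An occurrence of the bivincular pattern $123^{\star}$ in $x$ is a pair of indices $a<b<n$ with $x_a<x_b$ and $x_{b+1}=x_b+1$. *)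

From mathcomp Require Import all_boot.
Set Implicit Arguments. Unset Strict Implicit. Unset Printing Implicit Defensive.

(* Permutations are sequences of naturals; x in S_n means perm_eq x (iota 1 n).
   Positions are 1-based in the paper; nth below is 0-based. *)

Definition is_perm (n : nat) (x : seq nat) : bool := perm_eq x (iota 1 n).

Definition order_iso (s y : seq nat) : bool :=
  (size s == size y) &&
  [forall i : 'I_(size y), forall j : 'I_(size y),
     (nth 0 s i < nth 0 s j) == (nth 0 y i < nth 0 y j)].

Definition contains (w y : seq nat) : bool :=
  [exists m : (size w).-tuple bool, order_iso (mask m w) y].

Definition avoids (w y : seq nat) : bool := ~~ contains w y.

(* w^i : insert (size w).+1 immediately before w_i (1-based); at end if i = m+1 *)
Definition insert_max (w : seq nat) (i : nat) : seq nat :=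
  take i.-1 w ++ (size w).+1 :: drop i.-1 w.

Definition active_sites (w y : seq nat) : seq nat :=
  [seq i <- iota 1 (size w).+1 | avoids (insert_max w i) y].

Definition small (k : nat) (x : seq nat) : seq nat := [seq v <- x | v <= k].

Definition nAct (j : nat) (x y : seq nat) : nat :=
  size (active_sites (small ((size x).+1 - j) x) y).

(* occurrence of bivincular 123* : 1-based a < b < n, x_a < x_b, x_{b+1} = x_b + 1 *)
Definition contains_123star (x : seq nat) : Prop :=
  exists a b : nat, a < b /\ b.+1 < size x /\
    nth 0 x a < nth 0 x b /\ nth 0 x b.+1 = (nth 0 x b).+1.

(* Let w avoid 132 and let M exceed every entry of w.  Inserting M at the cut
   after the first c entries of w creates a 132 exactly when some entry before
   the cut is smaller than some entry after it, so |Act(w)| is the number of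
   "free" cuts of w.  Passing from small_k(x) to small_{k+1}(x) inserts k+1
   after the m entries <= k that precede it in x: the cuts inside that prefix
   stop being free, the cut right after k+1 is free, and the later cuts keep
   their status.  Writing A_k = |Act_{n+1-k}(x)|, this gives
   A_{k+1} + f_k(m) = A_k + 1, where f_k(m) counts the free cuts of small_k(x)
   among the first m.  Since the cut 0 is always free, A_{k+1} <= A_k iff some
   entry <= k precedes k+1; and A_{k+2} = A_{k+1} iff k+2 is preceded in
   small_{k+2}(x) by between 1 and m+1 entries, which for a 132-avoider means
   that k+2 immediately follows k+1.  At i = n-1-k the two conditions together
   say that x has an occurrence of 123* with x_b = k+1. *)

From mathcomp Require Import all_boot zify.
Set Implicit Arguments. Unset Strict Implicit. Unset Printing Implicit Defensive.

Local Notation p132 := [:: 1; 3; 2].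

Lemma order_iso_132 a b c : order_iso [:: a; b; c] p132 = (a < c < b).
Proof.
apply/idP/idP.
- case/andP=> _ /forallP iso.
  have iso02 := forallP (iso (@Ordinal 3 0 isT)) (@Ordinal 3 2 isT).
  have iso21 := forallP (iso (@Ordinal 3 2 isT)) (@Ordinal 3 1 isT).
  by move: iso02 iso21 => /= /eqP -> /eqP ->.
- case/andP=> ac cb; apply/andP; split=> //.
  apply/forallP=> -[[|[|[|i]]] ?] //; apply/forallP=> -[[|[|[|j]]] ?] //=;
  apply/eqP; lia.
Qed.

Lemma contains_132P w :
  reflect (exists a b c, subseq [:: a; b; c] w /\ a < c < b) (contains w p132).
Proof.
apply: (iffP existsP) => [[m]|[a [b [c [/subseqP [m sz_m abc] acb]]]]].
- have := mask_subseq m w.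
  case: (mask m w) => [|a [|b [|c [|d t]]]] sub_w; try by case/andP.
  by rewrite order_iso_132 => acb; exists a, b, c.
- have sz_m' : size m == size w by apply/eqP.
  by exists (Tuple sz_m'); rewrite /= -abc order_iso_132.
Qed.

Lemma avoids_132_subseq w a b c :
  avoids w p132 -> subseq [:: a; b; c] w -> ~~ (a < c < b).
Proof.
by move=> w132 sub; apply: contra w132 => acb; apply/contains_132P; exists a, b, c.
Qed.

Lemma subseq3_cat_cons (T : eqType) (a b c : T) p s :
  a \in p -> c \in s -> subseq [:: a; b; c] (p ++ b :: s).
Proof.
move=> ap cs; rewrite -cat1s; apply: cat_subseq; first by rewrite sub1seq.
by rewrite /= eqxx sub1seq.
Qed.

Lemma subseq_cat_cons_cases (T : eqType) (t p s : seq T) y :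
  subseq t (p ++ y :: s) ->
  subseq t (p ++ s) \/
  exists t1 t2, [/\ t = t1 ++ y :: t2, subseq t1 p & subseq t2 s].
Proof.
elim: p t => [|z p IHp] [|u t] sub; try by left; rewrite sub0seq.
- move: sub; rewrite [subseq _ _]/=.
  case: (eqVneq u y) => [-> sub|_ sub]; last by left.
  by right; exists [::], t.
- move: sub; rewrite cat_cons [subseq _ _]/=.
  case: (eqVneq u z) => [-> | ne] /IHp [sub | [t1 [t2 [-> sub1 sub2]]]].
  + by left; rewrite /= eqxx.
  + by right; exists (z :: t1), t2; rewrite /= eqxx.
  + by left; rewrite /= (negbTE ne).
  + right; exists t1, t2; split=> //.
    exact: subseq_trans sub1 (subseq_cons _ _).
Qed.

Definition ascent_across (w : seq nat) (c : nat) : bool :=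
  has (fun a => has (fun b => a < b) (drop c w)) (take c w).

Lemma contains_132_insert_max u v M : {in u ++ v, forall z, z < M} ->
  contains (u ++ M :: v) p132 =
  contains (u ++ v) p132 || ascent_across (u ++ v) (size u).
Proof.
move=> ltM; rewrite /ascent_across take_size_cat // drop_size_cat //.
have ltMu z : z \in u -> z < M by move=> zu; rewrite ltM // mem_cat zu.
have ltMv z : z \in v -> z < M by move=> zv; rewrite ltM // mem_cat zv orbT.
apply/contains_132P/orP => [[a [b [c [/subseq_cat_cons_cases sub acb]]]] |].
- case: sub => [sub | [t1 [t2 [abc sub1 sub2]]]].
    by left; apply/contains_132P; exists a, b, c.
  (* In an occurrence through M, M can only play the role of the 3. *)
  case: t1 abc sub1 sub2 => [|a1 [|b1 [|c1 t1]]] [] //.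
  + move=> aM t2E _ /mem_subseq/(_ c); rewrite -t2E !inE eqxx orbT.
    by move=> /(_ isT)/ltMv; rewrite -aM; lia.
  + move=> <- bM t2E; rewrite sub1seq => au /mem_subseq/(_ c).
    rewrite -t2E inE eqxx => /(_ isT) cv; right.
    by apply/hasP; exists a => //; apply/hasP; exists c => //; lia.
  + move=> <- <- cM _ /mem_subseq/(_ b); rewrite !inE eqxx orbT.
    by move=> /(_ isT)/ltMu; rewrite -cM; lia.
  + by case: t1.
- case=> [/contains_132P [a [b [c [sub acb]]]] | /hasP [a au /hasP [c cv ac]]].
    exists a, b, c; split=> //; apply: subseq_trans sub _.
    exact: cat_subseq (subseq_refl _) (subseq_cons _ _).
  by exists a, M, c; rewrite subseq3_cat_cons // ac ltMv.
Qed.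

Definition free_cuts (w : seq nat) (m : nat) : nat :=
  count (fun c => ~~ ascent_across w c) (iota 0 m).

Lemma size_active_sites_132 w :
  {in w, forall z, z <= size w} -> avoids w p132 ->
  size (active_sites w p132) = free_cuts w (size w).+1.
Proof.
move=> le_w w132; rewrite size_filter (iotaDl 1 0) count_map.
apply: eq_in_count => c; rewrite mem_iota ltnS => /= c_le.
rewrite /avoids /insert_max add1n -pred_Sn.
by rewrite contains_132_insert_max ?cat_take_drop ?(negbTE w132) ?size_takel.
Qed.

Lemma ascent_across0 w : ascent_across w 0 = false.
Proof. by rewrite /ascent_across take0. Qed.

Lemma free_cuts_gt0 w m : (0 < free_cuts w m) = (0 < m).
Proof. by case: m => // m; rewrite /free_cuts /= ascent_across0. Qed.

Lemma leq_free_cuts w : {homo free_cuts w : m k / m <= k}.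
Proof.
by move=> m k /subnKC <-; rewrite /free_cuts iotaD count_cat leq_addr.
Qed.

Section InsertMax.

Variables (u v : seq nat) (M : nat).
Hypothesis ltM : {in u ++ v, forall z, z < M}.

Lemma ascent_across_insert_max_left c :
  0 < c <= size u -> ascent_across (u ++ M :: v) c.
Proof.
move=> /andP [c_gt0 c_le]; apply/hasP.
have [a au] : exists a, take c u = a :: behead (take c u).
  by case: (u) c_le => [|a u']; case: c c_gt0 => // c; exists a.
exists a; first by rewrite takel_cat // au mem_head.
apply/hasP; exists M.
  rewrite -cat_rcons drop_cat size_rcons ltnS c_le drop_rcons //.
  by rewrite mem_cat mem_rcons mem_head.
by apply: ltM; rewrite mem_cat (mem_take (n0 := c)) // au mem_head.
Qed.

Lemma ascent_across_insert_max_right d :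
  ascent_across (u ++ M :: v) ((size u).+1 + d) = ascent_across (u ++ v) (size u + d).
Proof.
rewrite /ascent_across -cat_rcons -(size_rcons u M).
rewrite !take_cat !drop_cat !ltnNge !leq_addr /= !addKn !has_cat has_rcons.
have -> : has (fun b => M < b) (drop d v) = false.
  by apply/hasPn => b /mem_drop bv; rewrite -leqNgt ltnW // ltM // mem_cat bv orbT.
by rewrite orFb.
Qed.

Lemma free_cuts_insert_max_prefix m :
  m <= (size u).+1 -> free_cuts (u ++ M :: v) m = (0 < m).
Proof.
case: m => // m m_le; rewrite /free_cuts /= ascent_across0 -(add0n 1) iotaDl.
rewrite count_map (eq_in_count (a2 := pred0)) ?count_pred0 // => c.
rewrite mem_iota /= => c_lt; rewrite ascent_across_insert_max_left //; lia.
Qed.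

Lemma free_cuts_insert_max :
  free_cuts (u ++ M :: v) (size (u ++ M :: v)).+1 + free_cuts (u ++ v) (size u) =
  (free_cuts (u ++ v) (size (u ++ v)).+1).+1.
Proof.
have -> : (size (u ++ M :: v)).+1 = (size u).+1 + (size v).+1.
  by rewrite size_cat /= addSn addnS.
have -> : (size (u ++ v)).+1 = size u + (size v).+1 by rewrite size_cat addnS.
rewrite /free_cuts !iotaD !count_cat -/(free_cuts _ _) free_cuts_insert_max_prefix //.
have shift (a : pred nat) m n : count a (iota m n) = count (a \o addn m) (iota 0 n).
  by rewrite -{1}(addn0 m) iotaDl count_map.
rewrite !add0n (shift _ (size u).+1) (shift _ (size u)).
rewrite (eq_count (a2 := (fun c => ~~ ascent_across (u ++ v) c) \o addn (size u))).
  by rewrite -/(free_cuts _ _); lia.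
by move=> d /=; rewrite ascent_across_insert_max_right.
Qed.

Lemma free_cuts_insert_max_eq1 m : avoids (u ++ M :: v) p132 ->
  (free_cuts (u ++ M :: v) m == 1) = (0 < m <= (size u).+1).
Proof.
move=> uMv132; case: (leqP m (size u).+1) => m_le.
  by rewrite free_cuts_insert_max_prefix // andbT; case: m m_le.
rewrite andbF; apply/negbTE; rewrite neq_ltn; apply/orP; right.
apply: leq_trans (leq_free_cuts _ m_le).
(* The cuts 0 and (size u).+1 are free, the latter because u ++ M :: v avoids 132. *)
rewrite /free_cuts -[(size u).+2]addn1 iotaD count_cat -/(free_cuts _ _).
rewrite free_cuts_insert_max_prefix //=.
rewrite add0n addn0 -[(size u).+1]addn0 ascent_across_insert_max_right addn0.
by move: uMv132; rewrite /avoids contains_132_insert_max // negb_or => /andP [_ ->].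
Qed.

End InsertMax.

Lemma notin_uniq_cat_cons (T : eqType) (p s : seq T) y :
  uniq (p ++ y :: s) -> y \notin p ++ s.
Proof. by rewrite -cat1s uniq_catCA cat1s cons_uniq => /andP []. Qed.

Lemma small_le k w : {in small k w, forall z, z <= k}.
Proof. by move=> z; rewrite mem_filter => /andP []. Qed.

Lemma small_succ_notin k w : k.+1 \notin w -> small k.+1 w = small k w.
Proof.
move=> kw; apply: eq_in_filter => z zw; rewrite leq_eqVlt ltnS.
by case: eqVneq zw kw => // ->->.
Qed.

Lemma small_cat_cons_gt k y p s :
  k < y -> small k (p ++ y :: s) = small k p ++ small k s.
Proof. by move=> ky; rewrite /small filter_cat /= leqNgt ky. Qed.

Lemma small_succ_cat_cons k p s : uniq (p ++ k.+1 :: s) ->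
  small k.+1 (p ++ k.+1 :: s) = small k p ++ k.+1 :: small k s.
Proof.
move=> /notin_uniq_cat_cons; rewrite mem_cat negb_or => /andP [kp ks].
by rewrite /small filter_cat /= leqnn -!/(small _ _) !small_succ_notin.
Qed.

Lemma avoids_132_small k w : avoids w p132 -> avoids (small k w) p132.
Proof.
apply: contra => /contains_132P [a [b [c [sub acb]]]].
apply/contains_132P; exists a, b, c; split=> //.
exact: subseq_trans sub (filter_subseq _ _).
Qed.

Section Permutation.

Variables (n : nat) (x : seq nat).
Hypotheses (xP : is_perm n x) (x132 : avoids x p132).

Local Notation act k := (free_cuts (small k x) (size (small k x)).+1).

Lemma mem_perm z : (z \in x) = (0 < z <= n).
Proof. by rewrite (perm_mem xP) mem_iota add1n ltnS. Qed.

Lemma uniq_perm : uniq x.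
Proof. by rewrite (perm_uniq xP) iota_uniq. Qed.

Lemma notin_perm_cat_cons y p s : x = p ++ y :: s -> y \notin p ++ s.
Proof. by move=> xE; apply: notin_uniq_cat_cons; rewrite -xE uniq_perm. Qed.

Lemma size_small k : k <= n -> size (small k x) = k.
Proof.
move=> le_kn; rewrite size_filter (permP xP) -(subnKC le_kn) iotaD count_cat.
rewrite (@eq_in_count _ _ predT (iota 1 k)); last by move=> z; rewrite mem_iota /=; lia.
rewrite (@eq_in_count _ _ pred0 (iota _ (n - k))); last by move=> z; rewrite mem_iota /=; lia.
by rewrite count_predT count_pred0 size_iota addn0.
Qed.

Lemma nActE j k : 0 < j -> j + k = n.+1 -> nAct j x p132 = act k.
Proof.
move=> j_gt0 jk; rewrite /nAct (perm_size xP) size_iota.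
have -> : n.+1 - j = k by lia.
rewrite size_active_sites_132 ?avoids_132_small // size_small; last by lia.
by move=> z /small_le.
Qed.

Lemma act_succ k p s : x = p ++ k.+1 :: s ->
  act k.+1 + free_cuts (small k x) (size (small k p)) = (act k).+1.
Proof.
move=> xE; have x_uniq := uniq_perm; rewrite xE in x_uniq *.
rewrite small_succ_cat_cons // small_cat_cons_gt //; apply: free_cuts_insert_max.
by move=> z; rewrite -filter_cat => /small_le.
Qed.

Lemma small_succ_before_succ2 k p1 p2 s :
  x = p1 ++ k.+2 :: p2 ++ k.+1 :: s -> small k.+1 p1 = [::].
Proof.
move=> xE; apply/eqP; rewrite -[_ == _]negbK -has_filter; apply/hasPn => a ap /=.
have a_ne : a != k.+1.
  have /notin_perm_cat_cons : x = (p1 ++ k.+2 :: p2) ++ k.+1 :: s by rewrite xE -catA.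
  by apply: contraNneq => <-; rewrite !mem_cat ap.
have := avoids_132_subseq x132 (a := a) (b := k.+2) (c := k.+1).
rewrite xE subseq3_cat_cons ?mem_cat ?mem_head ?orbT // => /(_ isT); lia.
Qed.

Lemma small_between_succ k p s1 s2 :
  x = p ++ k.+1 :: s1 ++ k.+2 :: s2 -> small k s1 = s1.
Proof.
move=> xE; apply/all_filterP/allP => z zs1; case/splitPr: zs1 xE => s1a s1b xE.
have z_ne1 : z != k.+1.
  move/notin_perm_cat_cons: (xE).
  by apply: contraNneq => <-; rewrite !mem_cat mem_head !orbT.
have z_ne2 : z != k.+2.
  have /notin_perm_cat_cons : x = (p ++ k.+1 :: s1a ++ z :: s1b) ++ k.+2 :: s2.
    by rewrite xE -!catA /= -!catA.
  by apply: contraNneq => <-; rewrite !(mem_cat, in_cons) eqxx !orbT.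
have := avoids_132_subseq x132 (a := k.+1) (b := z) (c := k.+2).
have -> : x = (p ++ k.+1 :: s1a) ++ z :: s1b ++ k.+2 :: s2 by rewrite xE -!catA.
by rewrite subseq3_cat_cons ?mem_cat ?mem_head ?orbT // => /(_ isT); lia.
Qed.

Lemma act_succ_le k p s : x = p ++ k.+1 :: s ->
  (act k.+1 <= act k) = has (fun a => a <= k) p.
Proof.
move=> xE; have := act_succ xE.
rewrite -size_filter_gt0 -/(small k p) -(free_cuts_gt0 (small k x)); lia.
Qed.

Lemma act_succ2_before k p1 p2 s :
  x = p1 ++ k.+2 :: p2 ++ k.+1 :: s -> act k.+2 = (act k.+1).+1.
Proof.
by move=> xE; have := act_succ xE; rewrite (small_succ_before_succ2 xE) addn0.
Qed.

Lemma act_succ2_after k p s1 s2 :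
  x = p ++ k.+1 :: s1 ++ k.+2 :: s2 -> (act k.+2 == act k.+1) = (s1 == [::]).
Proof.
move=> xE; have xE' : x = (p ++ k.+1 :: s1) ++ k.+2 :: s2 by rewrite xE -catA.
have small_x : small k.+1 x = small k p ++ k.+1 :: small k (s1 ++ k.+2 :: s2).
  by rewrite {1}xE small_succ_cat_cons // -xE uniq_perm.
have ltM : {in small k p ++ small k (s1 ++ k.+2 :: s2), forall z, z < k.+1}.
  by move=> z; rewrite -filter_cat => /small_le.
have small_prefix : small k.+1 (p ++ k.+1 :: s1) = small k p ++ k.+1 :: s1.
  have : uniq (p ++ k.+1 :: s1) by move: uniq_perm; rewrite xE' cat_uniq => /andP [].
  by move=> /small_succ_cat_cons ->; rewrite (small_between_succ xE).
have := act_succ xE'; rewrite small_prefix size_cat /=.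
have := free_cuts_insert_max_eq1 ltM (size (small k p) + (size s1).+1).
rewrite -small_x => /(_ (avoids_132_small _ x132)).
move: (free_cuts (small k.+1 x) _) => f f_eq1 act_eq.
rewrite -eqSS -act_eq -[X in X == _]addn1 eqn_add2l eq_sym f_eq1.
have -> : (s1 == [::]) = (size s1 == 0) by case: (s1).
lia.
Qed.

Lemma act_succ2_eq k p s : k.+2 <= n -> x = p ++ k.+1 :: s ->
  (act k.+2 == act k.+1) = (head 0 s == k.+2).
Proof.
move=> le_k2n xE; have : k.+2 \in p ++ k.+1 :: s by rewrite -xE mem_perm le_k2n.
rewrite mem_cat in_cons (gtn_eqF (ltnSn _)) /= => k2_in; move: xE.
case/orP: k2_in => [/splitPr [p1 p2] xE | /splitPr [s1 s2] xE].
- have {}xE : x = p1 ++ k.+2 :: p2 ++ k.+1 :: s by rewrite xE -catA.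
  rewrite (act_succ2_before xE) (gtn_eqF (ltnSn _)).
  have /notin_perm_cat_cons : x = p1 ++ k.+2 :: p2 ++ k.+1 :: s := xE.
  case: s {xE} => //= z s; rewrite !mem_cat !inE => k2_notin.
  by apply/esym/negbTE; apply: contra k2_notin => /eqP ->; rewrite eqxx !orbT.
- rewrite (act_succ2_after xE).
  have /notin_perm_cat_cons : x = (p ++ k.+1 :: s1) ++ k.+2 :: s2 by rewrite xE -catA.
  case: s1 {xE} => [|z s1] /=; first by rewrite !eqxx.
  rewrite !mem_cat !inE => k2_notin.
  by apply/esym/negbTE; apply: contra k2_notin => /eqP ->; rewrite eqxx !orbT.
Qed.

Lemma act_pattern k : k.+2 <= n ->
  (act k.+2 = act k.+1 /\ act k.+1 <= act k) <->
  exists p s, x = p ++ k.+1 :: k.+2 :: s /\ has (fun a => a <= k) p.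
Proof.
move=> le_k2n; split => [[/eqP act_eq act_le] | [p [s [xE pk]]]].
- have : k.+1 \in x by rewrite mem_perm; lia.
  case/splitPr xE : {1}x / => [p s].
  rewrite (act_succ_le xE) in act_le; rewrite (act_succ2_eq le_k2n xE) in act_eq.
  by case: s xE act_eq => // z s xE /eqP /= ->; exists p, s.
- split; first by apply/eqP; rewrite (act_succ2_eq le_k2n xE).
  by rewrite (act_succ_le xE).
Qed.

End Permutation.

Lemma contains_123starP w : contains_123star w <->
  exists k p s, w = p ++ k.+1 :: k.+2 :: s /\ has (fun a => a <= k) p.
Proof.
split => [[a [b [ab [b_lt [wa_lt wb_succ]]]]] | [k [p [s [wE /hasP [a ap ak]]]]]].
- have wb_gt0 : 0 < nth 0 w b by lia.
  exists (nth 0 w b).-1, (take b w), (drop b.+2 w); rewrite prednK //; split.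
    by rewrite -wb_succ -!drop_nth ?cat_take_drop //; lia.
  apply/hasP; exists (nth 0 w a); last by lia.
  by rewrite -(nth_take 0 ab) mem_nth // size_takel // ltnW // ltnW.
- exists (index a p), (size p); rewrite wE size_cat !nth_cat nth_index // ltnn subnn.
  have -> : (size p).+1 < size p = false by rewrite ltnNge leqnSn.
  rewrite subSnn index_mem ap /=; split=> //; lia.
Qed.

Theorem theorem3p17 (n : nat) (x : seq nat) :
  3 <= n -> is_perm n x -> avoids x [:: 1; 3; 2] ->
  ((exists i : nat, 1 <= i <= n - 2 /\
      nAct i x [:: 1; 3; 2] = nAct i.+1 x [:: 1; 3; 2] /\
      nAct i.+1 x [:: 1; 3; 2] <= nAct i.+2 x [:: 1; 3; 2])
   <-> contains_123star x).
Proof.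
move=> n_ge3 xP x132; rewrite contains_123starP.
split=> [[i [/andP [i_gt0 i_le] [nAct_eq nAct_le]]] | [k [p [s [xE pk]]]]].
- have [k ik] : exists k, i + k.+2 = n.+1 by exists (n - i.+1); lia.
  exists k; apply/(act_pattern xP x132); first lia.
  have := nActE xP x132 (j := i) (k := k.+2).
  have := nActE xP x132 (j := i.+1) (k := k.+1).
  have := nActE xP x132 (j := i.+2) (k := k).
  lia.
- have [a ap ak] := hasP pk.
  have /andP [a_gt0 _] : 0 < a <= n by rewrite -(mem_perm xP) xE mem_cat ap.
  have /andP [_ k2_le] : 0 < k.+2 <= n.
    by rewrite -(mem_perm xP) xE mem_cat !inE eqxx !orbT.
  have [act_eq act_le] :=
    (act_pattern xP x132 k2_le).2 (ex_intro _ p (ex_intro _ s (conj xE pk))).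
  exists (n - k.+1).
  have := nActE xP x132 (j := n - k.+1) (k := k.+2).
  have := nActE xP x132 (j := (n - k.+1).+1) (k := k.+1).
  have := nActE xP x132 (j := (n - k.+1).+2) (k := k).
  lia.
Qed.
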